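(* Let $X$ be a Tychonoff space that is locally dense-pseudocompact. Then $X$ is discrete.
   Context: A space is pseudocompact if every continuous real-valued function on it is bounded. A space $Y$ is dense-pseudocompact if every dense subset of $Y$ (with the subspace topology) is pseudocompact. A space $X$ is locally dense-pseudocompact if for every $x\in X$ and every neighborhood $U$ of $x$ there is a neighborhood $V$ of $x$ with $V\subset U$ such that $V$ (as a subspace) is dense-pseudocompact. *)

From HB Require Import structures.
From mathcomp Require Import all_boot all_order all_algebra.
From mathcomp Require Import all_classical all_reals topology normedtype.
Set Implicit Arguments. Unset Strict Implicit. Unset Printing Implicit Defensive.
Import numFieldNormedType.Exports.
Import Order.TTheory GRing.Theory Num.Theory.
Local Open Scope classical_set_scope.
Local Open Scope ring_scope.

Definition tychonoff_space (X : topologicalType) :=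
  accessible_space X /\ completely_regular_space X.

Definition pseudocompact_set (R : realType) (X : topologicalType) (S : set X) :=
  forall f : X -> R, {within S, continuous f} ->
    exists M : R, forall x, S x -> `|f x| <= M.

(* D is a dense subset of the subspace Y: D ⊆ Y and Y ⊆ closure D
   (relative closure of D in Y is closure D ∩ Y). *)
Definition dense_in (X : topologicalType) (Y D : set X) :=
  D `<=` Y /\ Y `<=` closure D.

Definition dense_pseudocompact (R : realType) (X : topologicalType) (Y : set X) :=
  forall D : set X, dense_in Y D -> pseudocompact_set R D.

Definition locally_dense_pseudocompact (R : realType) (X : topologicalType) :=
  forall (x : X) (U : set X), nbhs x U ->
    exists V : set X, [/\ nbhs x V, V `<=` U & dense_pseudocompact R V].

Definition discrete_sp (X : topologicalType) := forall x : X, open [set x].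

From HB Require Import structures.
From mathcomp Require Import all_boot all_order all_algebra.
From mathcomp Require Import all_classical all_reals topology normedtype.
Import numFieldNormedType.Exports.
Import Order.TTheory GRing.Theory Num.Theory.
Set Implicit Arguments. Unset Strict Implicit. Unset Printing Implicit Defensive.
Local Open Scope classical_set_scope.
Local Open Scope ring_scope.

(* Every non-isolated point of a Hausdorff space has, inside each of its open
   neighbourhoods, a sequence of pairwise disjoint nonempty open sets: split
   off a nonempty open set from the neighbourhood, keep a smaller open
   neighbourhood of the point disjoint from it, and iterate.

   Such a sequence W_n inside a set V destroys the dense-pseudocompactness
   of V: with A the union of the W_n, the set D = V ∩ (A ∪ ~closure A) is
   dense in V, and the function equal to n on W_n and to 0 outside
   closure A is locally constant on D, hence continuous, but unbounded.

   A Tychonoff space is Hausdorff, so if a point x of a locally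
   dense-pseudocompact Tychonoff space were not isolated, applying this to a
   dense-pseudocompact neighbourhood of x would give a contradiction. *)

(* The real type R only serves the library's proof that completely regular
   spaces are regular (through a real-valued uniformity). *)
Lemma tychonoff_hausdorff (R : realType) (X : topologicalType) :
  tychonoff_space X -> hausdorff_space X.
Proof.
move=> [acc crs]; have reg := @completely_regular_regular R X crs.
rewrite open_hausdorff => x y xy.
have [A [B [oA oB Ax yB AB]]] := proj1 (regular_openP x) (reg x) [set y]
  (@accessible_closed_set1 X acc y) (fun yx => negP xy (introT eqP yx)).
by exists (A, B); [rewrite !inE; split=> //; exact: yB | split=> //; rewrite AB].
Qed.

Section nonisolated_points.
Variables (X : topologicalType) (x : X).
Hypotheses (hX : hausdorff_space X) (x_nonisolated : ~ open [set x]).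

Lemma nonisolated_split (U : set X) : open U -> U x ->
  exists W U' : set X,
    [/\ open W /\ W !=set0, open U' /\ U' x, W `|` U' `<=` U & W `&` U' = set0].
Proof.
move=> oU Ux.
have [y [Uy yx]] : exists y, U y /\ y <> x.
  apply: contrapT => noy; apply: x_nonisolated.
  suff -> : [set x] = U by [].
  apply/seteqP; split=> [z -> //|z Uz].
  by apply: contrapT => zx; apply: noy; exists z.
have := hX; rewrite open_hausdorff => /(_ x y).
case=> [|[A B] [/set_mem Ax /set_mem By] [/= oA oB /eqP AB]].
  by apply/eqP => xy; apply: yx.
exists (B `&` U), (A `&` U); split.
- by split; [exact: openI | exists y].
- by split; [exact: openI |].
- by move=> z [[]|[]].
- by rewrite setIACA [B `&` A]setIC AB set0I.
Qed.

Lemma nonisolated_disjoint_opens (U : set X) : open U -> U x ->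
  exists W : nat -> set X,
    [/\ forall n, open (W n) /\ W n !=set0, forall n, W n `<=` U
      & trivIset setT W].
Proof.
move=> oU Ux.
have /choice [split splitP] : forall V : set X, exists WV : set X * set X,
    open V /\ V x -> [/\ open WV.1 /\ WV.1 !=set0, open WV.2 /\ WV.2 x,
                         WV.1 `|` WV.2 `<=` V & WV.1 `&` WV.2 = set0].
  move=> V; have [[oV Vx]|nV] := pselect (open V /\ V x); last first.
    by exists (set0, set0) => /nV.
  by have [W [V' ?]] := nonisolated_split oV Vx; exists (W, V').
pose Us n := iter n (fun V => (split V).2) U.
have Us_nbhs n : open (Us n) /\ Us n x.
  elim: n => [//|n IHn]; by have [_ []] := splitP _ IHn.
have Us_step n : (split (Us n)).1 `|` Us n.+1 `<=` Us n.
  by have [] := splitP _ (Us_nbhs n).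
have Us_decr n k : Us (n + k)%N `<=` Us n.
  elim: k => [|k IHk]; first by rewrite addn0.
  by rewrite addnS; apply: subset_trans IHk => z Uz; apply: Us_step; right.
exists (fun n => (split (Us n)).1); split.
- by move=> n; have [] := splitP _ (Us_nbhs n).
- by move=> n z Wz; apply: (Us_decr 0%N n); apply: Us_step; left.
- apply: ltn_trivIset => n m mn; rewrite -subset0 => z [Wmz Wnz].
  have [_ _ _ disj] := splitP _ (Us_nbhs m).
  have := Us_decr m.+1 (n - m.+1)%N; rewrite addnC subnK // => Us_nm.
  by rewrite -disj; split=> //; apply: Us_nm; apply: Us_step; left.
Qed.

End nonisolated_points.

Lemma dense_in_exterior_completion (X : topologicalType) (V A : set X) :
  A `<=` V -> dense_in V (V `&` (A `|` ~` closure A)).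
Proof.
move=> AV; split=> [z [] //|z Vz].
have [Az|nAz] := pselect (closure A z).
  by apply: closureS Az => w Aw; split; [exact: AV | left].
by apply: subset_closure; split=> //; right.
Qed.

Section index_function.
Variables (R : realType) (X : topologicalType) (W : nat -> set X).
Hypotheses (W_open : forall n, open (W n)) (W_disj : trivIset setT W).

Definition index_of (z : X) : nat := xget 0%N [set n | W n z].

Lemma index_ofE n z : W n z -> index_of z = n.
Proof.
move=> Wnz; apply: xget_unique => // m Wmz.
by apply: W_disj => //; exists z.
Qed.

Lemma index_of_outside z : ~ (\bigcup_n W n) z -> index_of z = 0%N.
Proof. by move=> nWz; apply: xgetPN => n Wnz; apply: nWz; exists n. Qed.

(* The index function is locally constant, hence continuous, on the union of
   the W n together with the exterior of that union. *)
Lemma index_of_continuous :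
  let A := \bigcup_n W n in
  {within A `|` ~` closure A, continuous (fun z => (index_of z)%:R : R)}.
Proof.
move=> A; apply: continuous_in_subspaceT => z; rewrite inE => -[[n _ Wnz]|nAz].
  apply: (near_cst_continuous (n%:R : R)).
  apply: filterS (open_nbhs_nbhs (conj (W_open n) Wnz)) => w Wnw.
  by rewrite (index_ofE Wnw).
apply: (near_cst_continuous (0%:R : R)).
have oA : open (~` closure A) by rewrite openC; exact: closed_closure.
apply: filterS (open_nbhs_nbhs (conj oA nAz)) => w nAw.
by rewrite index_of_outside // => Aw; apply: nAw; exact: subset_closure.
Qed.

End index_function.

Lemma disjoint_opens_not_dense_pseudocompact (R : realType)
    (X : topologicalType) (V : set X) (W : nat -> set X) :
  (forall n, open (W n) /\ W n !=set0) -> (forall n, W n `<=` V) ->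
  trivIset setT W -> ~ dense_pseudocompact R V.
Proof.
move=> W_ne WV W_disj dpV; pose A := \bigcup_n W n.
have AV : A `<=` V by move=> z [n _ Wnz]; exact: WV Wnz.
have [M HM] := dpV _ (dense_in_exterior_completion AV) _
  (continuous_subspaceW (@subIsetr _ V _)
    (@index_of_continuous R X W (fun n => (W_ne n).1) W_disj)).
have [n Mn] : exists n : nat, M < n%:R.
  exists (Num.truncn `|M|).+1.
  by apply: le_lt_trans (ler_norm M) _; rewrite truncnS_gt.
have [_ [z Wnz]] := W_ne n.
have Az : A z by exists n.
have := HM z (conj (AV z Az) (or_introl Az)).
rewrite (index_ofE W_disj Wnz) ger0_norm // => nM.
by move: (lt_le_trans Mn nM); rewrite ltxx.
Qed.

Theorem mainTheorem5 (R : realType) (X : topologicalType) :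
  tychonoff_space X -> locally_dense_pseudocompact R X -> discrete_sp X.
Proof.
move=> tych ldp x; apply: contrapT => x_nonisolated.
have [V [nV _ dpV]] := ldp x setT filterT.
move: nV; rewrite nbhsE => -[U [oU Ux] UV].
have [W [W_ne WU W_disj]] :=
  nonisolated_disjoint_opens (tychonoff_hausdorff R tych) x_nonisolated oU Ux.
have WV n : W n `<=` V by apply: subset_trans (WU n) UV.
exact: (disjoint_opens_not_dense_pseudocompact W_ne WV W_disj dpV).
Qed.
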